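(* Let $G$ be a network with two source nodes $s_x,s_y$ and terminal set $\mathcal T$, and let $(X,Y)\sim p_{X,Y}$ be generated i.i.d. at $s_x,s_y$. If $H(K_{X,Y})=I(X;Y)$, then whenever the multicast problem $(G,p_{X,Y})$ is feasible (i.e. $H(X\mid Y)\le\rho_G(s_x)$, $H(Y\mid X)\le\rho_G(s_y)$, $H(X,Y)\le\rho_G(s_x,s_y)$), it is feasible by source decomposition.
   Context: A network is an acyclic directed graph with integer edge capacities and a set of terminals $\mathcal T$; $\rho(A;t)$ is the min-cut value from node set $A$ to terminal $t$, and $\rho_G(s_x)=\min_{t}\rho(s_x;t)$, $\rho_G(s_y)=\min_t\rho(s_y;t)$, $\rho_G(s_x,s_y)=\min_t\rho(\{s_x,s_y\};t)$. Every terminal must recover both $X$ and $Y$. $K_{X,Y}$ is the Gács–Körner common information: the index of the connected component containing $(X,Y)$ of the bipartite graph on $\mathcal X\cup\mathcal Y$ with an edge $x$–$y$ iff $p_{X,Y}(x,y)>0$. Source decomposition writes $X\leftrightarrow (X',K_{X,Y})$, $Y\leftrightarrow(Y',K_{X,Y})$ bijectively ($X'$ = index of $X$'s value within its component). Feasible by source decomposition means: in the expanded network obtained by adding nodes $s_{X'},s_{Y'},s_K$ with infinite-capacity edges $s_{X'}\to s_x$, $s_{Y'}\to s_y$, $s_K\to s_x$, $s_K\to s_y$, multicasting independent sources at $s_{X'},s_{Y'},s_K$ with rates $H(X\mid K_{X,Y}),H(Y\mid K_{X,Y}),H(K_{X,Y})$ to all terminals is feasible, i.e. for every nonempty subset $S$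 of these three nodes the sum of their rates is at most the minimum over terminals of the min-cut from $S$ in the expanded network. *)

From HB Require Import structures.
From mathcomp Require Import all_boot all_order all_algebra.
From mathcomp Require Import boolp classical_sets reals constructive_ereal ereal exp.
Set Implicit Arguments. Unset Strict Implicit. Unset Printing Implicit Defensive.
Import Order.TTheory GRing.Theory Num.Theory.
Local Open Scope classical_set_scope.
Local Open Scope ring_scope.

(* A network on node type V: capacity c u v (0 = no edge u -> v). *)
Definition edge_rel (V : finType) (c : V -> V -> nat) : rel V :=
  fun u v => (0 < c u v)%N.

Definition acyclic (V : finType) (c : V -> V -> nat) : Prop :=
  forall u v : V, (0 < c u v)%N -> ~~ connect (edge_rel c) v u.

Definition cut_value (R : realType) (W : finType) (c : W -> W -> \bar R)
    (S : {set W}) : \bar R :=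
  (\sum_(u in S) \sum_(v in ~: S) c u v)%E.

(* Min-cut value from node set A to node t (+oo if no cut exists). *)
Definition mincut (R : realType) (W : finType) (c : W -> W -> \bar R)
    (A : {set W}) (t : W) : \bar R :=
  ereal_inf [set cut_value c S | S in [set S : {set W} | (A \subset S) && (t \notin S)]].

Definition ecap (R : realType) (V : finType) (c : V -> V -> nat) : V -> V -> \bar R :=
  fun u v => ((c u v)%:R)%:E.

Definition rho (R : realType) (V : finType) (c : V -> V -> nat)
    (A : {set V}) (t : V) : \bar R := mincut (ecap R c) A t.

Definition rhoG (R : realType) (V : finType) (c : V -> V -> nat)
    (T : {set V}) (A : {set V}) : \bar R :=
  ereal_inf [set rho R c A t | t in [set t | t \in T]].

(* Nodes: V + 'I_3, with inr 0 = s_{X'}, inr 1 = s_{Y'}, inr 2 = s_K. *)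
Definition iX' : 'I_3 := @Ordinal 3 0 isT.
Definition iY' : 'I_3 := @Ordinal 3 1 isT.
Definition iK  : 'I_3 := @Ordinal 3 2 isT.

Definition exp_cap (R : realType) (V : finType) (c : V -> V -> nat) (sx sy : V)
    : V + 'I_3 -> V + 'I_3 -> \bar R :=
  fun a b =>
    match a, b with
    | inl u, inl v => ((c u v)%:R)%:E
    | inr i, inl v =>
        if ((i == iX') && (v == sx)) || ((i == iY') && (v == sy))
           || ((i == iK) && ((v == sx) || (v == sy)))
        then +oo%E else 0%E
    | _, _ => 0%E
    end.

Definition log2 (R : realType) (x : R) : R := ln x / ln 2.

Definition entropy (R : realType) (B : finType) (q : B -> R) : R :=
  - \sum_(b : B) q b * log2 (q b).

Definition push (R : realType) (A B : finType) (f : A -> B) (p : A -> R) : B -> R :=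
  fun b => \sum_(a : A | f a == b) p a.

Definition is_pmf (R : realType) (A : finType) (p : A -> R) : Prop :=
  (forall a, 0 <= p a) /\ \sum_(a : A) p a = 1.

Section Info.
Variables (R : realType) (X Y : finType) (p : X * Y -> R).

Definition HXY : R := entropy p.
Definition HX : R := entropy (push fst p).
Definition HY : R := entropy (push snd p).
Definition HX_Y : R := HXY - HY.
Definition HY_X : R := HXY - HX.
Definition MI : R := HX + HY - HXY.

Definition char_rel : rel (X + Y) :=
  fun a b => match a, b with
             | inl x, inr y => 0 < p (x, y)
             | inr y, inl x => 0 < p (x, y)
             | _, _ => false
             end.

(* Gacs-Korner common part: index (representative) of the connected
   component containing x (resp. y). *)
Definition GK_X (x : X) : X + Y := fingraph.root char_rel (inl x).
Definition GK_Y (y : Y) : X + Y := fingraph.root char_rel (inr y).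
Definition GK (xy : X * Y) : X + Y := GK_X xy.1.

Definition HK : R := entropy (push GK p).
Definition HXK : R := entropy (push (fun xy => (xy.1, GK xy)) p).
Definition HYK : R := entropy (push (fun xy => (xy.2, GK xy)) p).
Definition HX_K : R := HXK - HK.
Definition HY_K : R := HYK - HK.

End Info.

Definition dec_rate (R : realType) (X Y : finType) (p : X * Y -> R) (i : 'I_3) : R :=
  if i == iX' then HX_K p else if i == iY' then HY_K p else HK p.

Definition feasible_by_decomposition (R : realType) (V : finType)
    (c : V -> V -> nat) (sx sy : V) (T : {set V})
    (X Y : finType) (p : X * Y -> R) : Prop :=
  forall S : {set 'I_3}, S != finset.set0 ->
    ((\sum_(i in S) dec_rate p i)%:E <=
      ereal_inf [set mincut (exp_cap R c sx sy) (inr @: S) (inl t) | t in [set t | t \in T]])%E.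

From HB Require Import structures.
From mathcomp Require Import all_boot all_order all_algebra.
From mathcomp Require Import boolp classical_sets reals constructive_ereal ereal exp.
From mathcomp Require Import lra.
Set Implicit Arguments. Unset Strict Implicit. Unset Printing Implicit Defensive.
Import Order.TTheory GRing.Theory Num.Theory.
Local Open Scope classical_set_scope.
Local Open Scope ring_scope.

(* Since K is a function of X, and on the support of p also of Y, adjoining K
   to X or to Y leaves the entropy unchanged: H(X|K) = H(X) - H(K).  With
   H(K) = I(X;Y) the three decomposition rates become H(X|Y), H(Y|X) and H(K),
   which add up to H(X,Y).  In the expanded network a cut separating s_{X'}
   alone from t is a cut separating s_x from t in G (the infinite edge into
   s_x must not be cut), and similarly for s_{Y'}; every other nonempty set of
   new sources feeds both s_x and s_y, so its finite cuts are cuts of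
   {s_x, s_y} in G, whose value is at least H(X,Y). *)

Section Entropy.
Variable R : realType.

Lemma log2_ler (x y : R) : 0 < x -> x <= y -> log2 x <= log2 y.
Proof.
move=> x_gt0 le_xy; rewrite /log2 ler_pM2r ?invr_gt0 ?ln_gt0 ?ltr1n //.
by rewrite ler_ln // posrE (lt_le_trans x_gt0).
Qed.

Lemma log2_le0 (x : R) : x <= 1 -> log2 x <= 0.
Proof.
move=> x_le1; rewrite /log2 mulr_le0_ge0 ?ln_le0 // invr_ge0 ltW // ln_gt0 //.
by rewrite ltr1n.
Qed.

Lemma pmf_le1 (A : finType) (q : A -> R) : is_pmf q -> forall a, 0 <= q a <= 1.
Proof.
by case=> q_ge0 q_sum1 a; rewrite q_ge0 -q_sum1 (bigD1 a) //= lerDl sumr_ge0.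
Qed.

Lemma entropy_ge0 (A : finType) (q : A -> R) : is_pmf q -> 0 <= entropy q.
Proof.
move=> /pmf_le1 q01; rewrite /entropy oppr_ge0; apply: sumr_le0 => a _.
by case/andP: (q01 a) => q_ge0 q_le1; rewrite mulr_ge0_le0 // log2_le0.
Qed.

Lemma eq_entropy (A : finType) (q q' : A -> R) : q =1 q' -> entropy q = entropy q'.
Proof. by move=> eq_q; rewrite /entropy; congr (- _); apply: eq_bigr => a _; rewrite eq_q.
Qed.

Lemma push_ge0 (A B : finType) (f : A -> B) (q : A -> R) :
  (forall a, 0 <= q a) -> forall b, 0 <= push f q b.
Proof. by move=> q_ge0 b; apply: sumr_ge0. Qed.

Lemma push_pmf (A B : finType) (f : A -> B) (q : A -> R) :
  is_pmf q -> is_pmf (push f q).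
Proof.
case=> q_ge0 q_sum1; split; first exact: push_ge0.
by rewrite -q_sum1 (partition_big f xpredT).
Qed.

Lemma push_comp (A B C : finType) (f : B -> C) (g : A -> B) (q : A -> R) :
  push f (push g q) =1 push (f \o g) q.
Proof.
move=> z; rewrite /push [RHS](partition_big g (fun b => f b == z)) //=.
apply: eq_bigr => b /eqP fb_z; apply: eq_bigl => a.
by have [->|] := eqVneq (g a) b; rewrite ?fb_z ?eqxx ?andbF.
Qed.

Lemma push_id (A : finType) (q : A -> R) : push id q =1 q.
Proof. by move=> a; rewrite /push big_pred1_eq. Qed.

Lemma eq_push_on_support (A B : finType) (f g : A -> B) (q : A -> R) :
  (forall a, q a != 0 -> f a = g a) -> push f q =1 push g q.
Proof.
move=> eq_fg b; rewrite /push [LHS]big_mkcond [RHS]big_mkcond /=.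
apply: eq_bigr => a _; have [->|qa_neq0] := eqVneq (q a) 0; first by do 2!case: ifP.
by rewrite eq_fg.
Qed.

Lemma entropy_push_le (A B : finType) (f : A -> B) (q : A -> R) :
  (forall a, 0 <= q a) -> entropy (push f q) <= entropy q.
Proof.
move=> q_ge0; rewrite /entropy lerN2.
have -> : \sum_b push f q b * log2 (push f q b) =
          \sum_a q a * log2 (push f q (f a)).
  rewrite [RHS](partition_big f xpredT) //=; apply: eq_bigr => b _.
  by rewrite /push big_distrl; apply: eq_bigr => a /eqP ->.
apply: ler_sum => a _; have [->|qa_neq0] := eqVneq (q a) 0; first by rewrite !mul0r.
have qa_gt0 : 0 < q a by rewrite lt_neqAle eq_sym qa_neq0 q_ge0.
rewrite ler_pM2l // log2_ler // /push (bigD1 a) //= lerDl.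
exact: sumr_ge0.
Qed.

Lemma entropy_push_can (A B : finType) (f : A -> B) (g : B -> A) (q : A -> R) :
  cancel f g -> (forall a, 0 <= q a) -> entropy (push f q) = entropy q.
Proof.
move=> fK q_ge0; apply/eqP; rewrite eq_le entropy_push_le //=.
have -> : entropy q = entropy (push g (push f q)).
  apply: eq_entropy => a; rewrite push_comp -[LHS]push_id.
  by apply: eq_push_on_support => a' _ /=; rewrite fK.
exact/entropy_push_le/push_ge0.
Qed.

End Entropy.

Section CommonPart.
Variables (R : realType) (X Y : finType) (p : X * Y -> R).
Hypothesis p_pmf : is_pmf p.

Let p_ge0 a : 0 <= p a. Proof. by case: p_pmf. Qed.

Lemma GK_X_Y_support x y : p (x, y) != 0 -> GK_X p x = GK_Y p y.
Proof.
move=> pxy_neq0; apply/eqP; rewrite /GK_X /GK_Y root_connect.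
  by apply: connect1; rewrite /= lt_neqAle eq_sym pxy_neq0 p_ge0.
by apply: sym_connect_sym => [[a|a] [b|b]].
Qed.

Lemma HXK_HX : HXK p = HX p.
Proof.
rewrite /HXK /HX -(@entropy_push_can _ _ _ (fun x => (x, GK_X p x)) fst) //;
  last exact: push_ge0.
by apply: eq_entropy => b; rewrite push_comp.
Qed.

Lemma HYK_HY : HYK p = HY p.
Proof.
rewrite /HYK /HY -(@entropy_push_can _ _ _ (fun y => (y, GK_Y p y)) fst) //;
  last exact: push_ge0.
apply: eq_entropy => b; rewrite push_comp; apply: eq_push_on_support => -[x y] pxy.
by rewrite /GK /= (GK_X_Y_support pxy).
Qed.

Hypothesis HK_MI : HK p = MI p.

Lemma HX_K_HX_Y : HX_K p = HX_Y p.
Proof. by rewrite /HX_K HXK_HX HK_MI /MI /HX_Y; lra. Qed.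

Lemma HY_K_HY_X : HY_K p = HY_X p.
Proof. by rewrite /HY_K HYK_HY HK_MI /MI /HY_X; lra. Qed.

Lemma dec_rate_ge0 i : 0 <= dec_rate p i.
Proof.
have HX_le : HX p <= HXY p by exact: entropy_push_le.
have HY_le : HY p <= HXY p by exact: entropy_push_le.
rewrite /dec_rate HX_K_HX_Y HY_K_HY_X /HX_Y /HY_X.
case: ifP => _; first by rewrite subr_ge0.
case: ifP => _; first by rewrite subr_ge0.
exact/entropy_ge0/push_pmf.
Qed.

Lemma sum_dec_rate : \sum_i dec_rate p i = HXY p.
Proof.
rewrite !big_ord_recl big_ord0 /dec_rate /= HX_K_HX_Y HY_K_HY_X HK_MI /MI /HX_Y /HY_X.
lra.
Qed.

Lemma sum_dec_rate_le (S : {set 'I_3}) : \sum_(i in S) dec_rate p i <= HXY p.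
Proof.
rewrite -sum_dec_rate [leLHS]big_mkcond ler_sum // => i _.
by case: ifP => // _; exact: dec_rate_ge0.
Qed.

End CommonPart.

Lemma ord3_ind (P : 'I_3 -> Prop) : P iX' -> P iY' -> P iK -> forall i, P i.
Proof.
move=> PX' PY' PK [[|[|[|n]]] lt_i3] //.
- by rewrite (_ : Ordinal _ = iX') //; exact: val_inj.
- by rewrite (_ : Ordinal _ = iY') //; exact: val_inj.
- by rewrite (_ : Ordinal _ = iK) //; exact: val_inj.
Qed.

Lemma nonempty_subset_ord3 (S : {set 'I_3}) : S != finset.set0 ->
  [\/ S = [set iX']%SET, S = [set iY']%SET |
      ((iX' \in S) || (iK \in S)) && ((iY' \in S) || (iK \in S))].
Proof.
move=> S_neq0; case SX: (iX' \in S); case SY: (iY' \in S); case SK: (iK \in S);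
  try by constructor 3.
- by constructor 1; apply/setP; elim/ord3_ind; rewrite !inE ?SX ?SY ?SK.
- by constructor 2; apply/setP; elim/ord3_ind; rewrite !inE ?SX ?SY ?SK.
- by case/set0Pn: S_neq0; elim/ord3_ind; rewrite ?SX ?SY ?SK.
Qed.

Local Open Scope ereal_scope.

Lemma mincut_le_cut (R : realType) (W : finType) (cap : W -> W -> \bar R)
    (A S : {set W}) (t : W) :
  A \subset S -> t \notin S -> mincut cap A t <= cut_value cap S.
Proof. by move=> sub_AS tS; apply: ereal_inf_lbound; exists S => //=; rewrite sub_AS.
Qed.

Section ExpandedNetwork.
Variables (R : realType) (V : finType) (c : V -> V -> nat) (sx sy : V).
Local Notation ec := (exp_cap R c sx sy).

Lemma exp_cap_ge0 a b : 0 <= ec a b.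
Proof. by case: a b => [u|i] [v|j] //=; rewrite ?lee_fin //; case: ifP. Qed.

Lemma cut_value_ge_edge (S : {set V + 'I_3}) u w :
  u \in S -> w \notin S -> ec u w <= cut_value ec S.
Proof.
move=> uS wS; rewrite /cut_value (bigD1 u) //= (bigD1 w) ?inE //=.
rewrite -addrA leeDl // adde_ge0 // sume_ge0 // => *; first exact: exp_cap_ge0.
by rewrite sume_ge0 // => *; exact: exp_cap_ge0.
Qed.

Lemma cut_value_restrict (S : {set V + 'I_3}) :
  cut_value (ecap R c) [set v | inl v \in S] <= cut_value ec S.
Proof.
rewrite /cut_value big_sumType; apply: le_trans (leeDl _ _); last first.
  by apply: sume_ge0 => *; apply: sume_ge0 => *; exact: exp_cap_ge0.
rewrite [leLHS](eq_bigl (fun u => inl u \in S)) => [|u]; last by rewrite inE.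
apply: lee_sum => u _; rewrite big_sumType; apply: le_trans (leeDl _ _); last first.
  by apply: sume_ge0 => *; exact: exp_cap_ge0.
by rewrite [leLHS](eq_bigl (fun v => inl v \in ~: S)) => [|v]; rewrite ?inE.
Qed.

Definition feeds (S : {set 'I_3}) (B : {set V}) : Prop :=
  forall v, v \in B -> exists2 i, i \in S & ec (inr i) (inl v) = +oo.

Lemma exp_cap_feeds_sx (S : {set 'I_3}) :
  (iX' \in S) || (iK \in S) -> exists2 i, i \in S & ec (inr i) (inl sx) = +oo.
Proof. by case/orP=> ?; [exists iX' | exists iK]; rewrite //= /exp_cap !eqxx. Qed.

Lemma exp_cap_feeds_sy (S : {set 'I_3}) :
  (iY' \in S) || (iK \in S) -> exists2 i, i \in S & ec (inr i) (inl sy) = +oo.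
Proof. by case/orP=> ?; [exists iY' | exists iK]; rewrite //= /exp_cap !eqxx ?orbT. Qed.

Lemma rho_le_mincut_expanded (S : {set 'I_3}) (B : {set V}) t :
  feeds S B -> rho R c B t <= mincut ec (inr @: S) (inl t).
Proof.
move=> feedsB; apply: le_ereal_inf_tmp => _ [S' /= /andP[sub_S tS'] <-].
have [B_sub|] := pselect (forall v, v \in B -> inl v \in S'); last first.
  move=> /existsNP[v /not_implyP[vB /negP vS']]; have [i iS ec_inf] := feedsB v vB.
  have := cut_value_ge_edge (fintype.subsetP sub_S _ (imset_f inr iS)) vS'.
  by rewrite ec_inf leye_eq => /eqP ->; exact: leey.
apply: le_trans (cut_value_restrict S'); apply: mincut_le_cut; rewrite ?inE //.
by apply/fintype.subsetP => v /B_sub; rewrite inE.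
Qed.

Lemma rhoG_le_mincut_expanded (T : {set V}) (S : {set 'I_3}) (B : {set V}) t :
  t \in T -> feeds S B -> rhoG R c T B <= mincut ec (inr @: S) (inl t).
Proof.
move=> tT feedsB; apply: le_trans (rho_le_mincut_expanded t feedsB).
by apply: ereal_inf_lbound; exists t; rewrite ?inE.
Qed.

End ExpandedNetwork.

Theorem corollary2 (R : realType) (V : finType) (c : V -> V -> nat)
    (sx sy : V) (T : {set V}) (X Y : finType) (p : X * Y -> R) :
  acyclic c -> sx != sy -> is_pmf p ->
  HK p = MI p ->
  ((HX_Y p)%:E <= rhoG R c T [set sx])%E ->
  ((HY_X p)%:E <= rhoG R c T [set sy])%E ->
  ((HXY p)%:E <= rhoG R c T [set sx; sy])%E ->
  feasible_by_decomposition c sx sy T p.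
Proof.
move=> _ _ p_pmf HK_MI le_HX_Y le_HY_X le_HXY S S_neq0.
apply: le_ereal_inf_tmp => _ [t tT <-].
case: (nonempty_subset_ord3 S_neq0) => [-> | -> | /andP[fed_sx fed_sy]].
- rewrite big_set1 /dec_rate eqxx (HX_K_HX_Y p_pmf HK_MI).
  apply: le_trans le_HX_Y (rhoG_le_mincut_expanded tT _).
  by move=> v /set1P ->; apply: exp_cap_feeds_sx; rewrite set11.
- rewrite big_set1 /dec_rate /= (HY_K_HY_X p_pmf HK_MI).
  apply: le_trans le_HY_X (rhoG_le_mincut_expanded tT _).
  by move=> v /set1P ->; apply: exp_cap_feeds_sy; rewrite set11.
- apply: le_trans (le_trans _ le_HXY) (rhoG_le_mincut_expanded tT _).
    by rewrite lee_fin sum_dec_rate_le.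
  by move=> v /set2P[] ->; [exact: exp_cap_feeds_sx | exact: exp_cap_feeds_sy].
Qed.
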